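(* Let $\alpha\in\mathbb{Q}$ and let $$f(x)=c_0+c_1(x-\alpha)^{e_1}+c_2(x-\alpha)^{e_2}+\cdots+c_t(x-\alpha)^{e_t}\in\mathbb{Q}[x],$$ where $c_0\in\mathbb{Q}$, $c_1,\dots,c_t\in\mathbb{Q}\setminus\{0\}$ and $0<e_1<e_2<\cdots<e_t$ are integers. Let $B_T\in\mathbb{N}$ with $t\le B_T$. Let $p$ be a prime such that: (i) $c_t\not\equiv 0 \pmod p$; (ii) for all $i\in\{1,2,\dots,t-1\}$, $e_t\not\equiv e_i \pmod{p-1}$; (iii) for all $i\in\{1,\dots,2B_T\}$, $e_t\not\equiv i\pmod{p-1}$. Then the degree of $f^{(p)}$ is greater than $2B_T$.
   Context: For a prime $p$ and $f\in\mathbb{Q}[x]$, $f^{(p)}\in\mathbb{Z}_p[x]$ denotes the unique polynomial of degree less than $p$ which is congruent to $f$ modulo $x^p-x$ and whose coefficients are reduced modulo $p$ (so $f^{(p)}(a)\equiv f(a)\bmod p$ for all $a\in\mathbb{Z}_p$). For a rational number $c$, ''$c\not\equiv 0\pmod p$'' means that the reduction of $c$ modulo $p$ is well-defined and nonzero. *)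

From HB Require Import structures.
From mathcomp Require Import all_boot all_order all_algebra.
Set Implicit Arguments. Unset Strict Implicit. Unset Printing Implicit Defensive.
Import Order.TTheory GRing.Theory Num.Theory.
Local Open Scope ring_scope.

Definition p_integral (p : nat) (q : rat) : bool := ~~ (p %| `|denq q|)%N.

(* Reduction mod p of a rational (meaningful when p_integral p q). *)
Definition red_rat (p : nat) (q : rat) : 'F_p :=
  (numq q)%:~R / ((denq q)%:~R).

Definition nonzero_mod (p : nat) (c : rat) : bool :=
  p_integral p c && ~~ (p %| `|numq c|)%N.

(* f^(p): reduce coefficients mod p, then take the remainder mod x^p - x,
   i.e. the unique polynomial of degree < p congruent to f mod x^p - x. *)
Definition poly_red (p : nat) (f : {poly rat}) : {poly 'F_p} :=
  (map_poly (red_rat p) f) %% ('X^p - 'X).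

From HB Require Import structures.
From mathcomp Require Import all_boot all_order all_algebra finfield.
From mathcomp Require Import ring zify.
Set Implicit Arguments. Unset Strict Implicit. Unset Printing Implicit Defensive.
Import Order.TTheory GRing.Theory Num.Theory.
Local Open Scope ring_scope.

(* Let d in [1, p-1] be the residue of e_t modulo p-1.  Modulo x^p - x, a
   monomial x^j with j > 0 reduces to x^(red_exp p j), whose exponent is the
   residue of j in [1, p-1]; moreover x^p - x is invariant under the
   translations x -> x + u of F_p[x], and reduction modulo p is a ring
   morphism on the p-integral rationals.

   If alpha is p-integral, f^(p) is a translate of the reduction of
   f(x + alpha) = c_0 + sum c_i x^(e_i) modulo x^p - x.  As e_t is alone in its
   class modulo p-1, the coefficient of x^d there is c_t mod p <> 0, so
   deg f^(p) >= d > 2 B_T.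

   If alpha were not p-integral, b = 1/alpha would be p-integral with b = 0
   mod p, so b^(e_t) f(x/b) would be p-integral and reduce to c_t x^(e_t).  Its
   translate by 1 is b^(e_t) (c_0 + sum c_i alpha^(e_i) x^(e_i)), whose
   reduction modulo x^p - x vanishes outside the degrees 0 and red_exp p e_i,
   and so misses some degree in [1, d] because t < d.  Yet that reduction is
   c_t (x + 1)^d, whose coefficients are all nonzero since d < p. *)

Lemma gt_size (R : nzSemiRingType) (Q : {poly R}) k : Q`_k != 0 -> (k < size Q)%N.
Proof. by move=> Qk; rewrite ltnNge; apply: contra Qk => /leq_sizeP ->. Qed.

Lemma coef_comp_scaleX (R : comNzRingType) (P : {poly R}) (a : R) k :
  (P \Po (a *: 'X))`_k = a ^+ k * P`_k.
Proof.
rewrite coef_comp_poly; under eq_bigr do rewrite exprZn coefZ coefXn.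
have [k_lt | k_ge] := ltnP k (size P); last first.
  rewrite nth_default // mulr0 big1 // => i _.
  by rewrite (_ : (k == i) = false) ?mulr0 //; have := ltn_ord i; lia.
rewrite (bigD1 (Ordinal k_lt)) //= eqxx mulr1 big1 ?addr0 1?mulrC // => i ik.
rewrite (_ : (k == i) = false) ?mulr0 //.
by apply: contraNF ik => /eqP ki; apply/eqP/val_inj.
Qed.

Lemma coef_XaddC1_exp (R : nzRingType) d k : (k <= d)%N ->
  (('X + 1 : {poly R}) ^+ d)`_k = 'C(d, k)%:R.
Proof.
move=> kd; rewrite exprD1n coef_sum (bigD1 (Ordinal (kd : (k < d.+1)%N))) //=.
rewrite coefMn coefXn eqxx big1 ?addr0 // => i /eqP ik.
rewrite coefMn coefXn; case: eqP => [ki | _]; last exact: mul0rn.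
by case: ik; apply: val_inj.
Qed.

Lemma prime_ndvd_bin p d k : prime p -> (d < p)%N -> (k <= d)%N ->
  ~~ (p %| 'C(d, k))%N.
Proof.
move=> pP dp kd; have pNfact : ~~ (p %| d`!)%N.
  rewrite fact_prod Euclid_dvd_prod // big_nat big1 // => i /andP [i_gt0 i_le].
  by apply/negP => /dvdn_leq; lia.
by apply: contra pNfact; rewrite -(bin_fact kd); apply: dvdn_mulr.
Qed.

Lemma exists_notin_image (h : nat -> nat) t d : (t < d)%N ->
  exists2 k, (1 <= k <= d)%N & forall i, (1 <= i <= t)%N -> h i != k.
Proof.
move=> td; pose S := map h (iota 1 t).
have [/allP S_full | /allPn [k k_range kNS]] := boolP (all (mem S) (iota 1 d)).
  have := uniq_leq_size (iota_uniq 1 d) S_full.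
  by rewrite size_map !size_iota; lia.
exists k; first by move: k_range; rewrite mem_iota; lia.
move=> i i_range; apply: contraNneq kNS => <-.
by apply: map_f; rewrite mem_iota; lia.
Qed.

Lemma homo_ltn_range (e : nat -> nat) t :
  (forall i, (1 <= i < t)%N -> (e i < e i.+1)%N) ->
  {in [pred i | 1 <= i <= t]%N &, {homo e : i j / (i < j)%N}}.
Proof.
move=> e_lt_succ; apply: homo_ltn_in => [|i j|i]; first exact: ltn_trans.
  by rewrite !inE => ? ? k; rewrite inE; lia.
by rewrite !inE => ? ?; apply: e_lt_succ; lia.
Qed.

(** * p-integral rationals and their reduction modulo p *)

(* For prime p this is [p_integral p] (lemma [pintP]); the coprimality form
   is a subring for every p. *)
Definition pint (p : nat) : {pred rat} := fun q => coprime `|denq q| p.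

Lemma pintP p q : prime p -> p_integral p q = (q \in pint p).
Proof. by move=> pP; rewrite /p_integral unfold_in /= coprime_sym prime_coprime. Qed.

Lemma dvdz_denq (q : rat) (n m : int) : q * n%:~R = m%:~R -> (denq q %| n)%Z.
Proof.
move=> qn; have E : numq q * n = m * denq q.
  by apply: (@intr_inj rat); rewrite !rmorphM /= numqE -qn; ring.
have cp : coprimez (denq q) (numq q) by rewrite coprimez_sym coprimezE coprime_num_den.
by rewrite -(Gauss_dvdzr _ cp) E dvdz_mull.
Qed.

Lemma pint_frac p (q : rat) (n m : int) :
  coprime `|n| p -> q * n%:~R = m%:~R -> q \in pint p.
Proof. by move=> np /dvdz_denq dn; apply: coprime_dvdl np. Qed.

Lemma pint_subring_closed p : subring_closed (pint p).
Proof.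
split; first by rewrite unfold_in /= coprime1n.
- move=> x y; rewrite !unfold_in /= => xP yP.
  apply: (@pint_frac p _ (denq x * denq y) (numq x * denq y - numq y * denq x)).
    by rewrite abszM coprimeMl xP yP.
  by rewrite rmorphM rmorphB !rmorphM /= !numqE; ring.
- move=> x y; rewrite !unfold_in /= => xP yP.
  apply: (@pint_frac p _ (denq x * denq y) (numq x * numq y)).
    by rewrite abszM coprimeMl xP yP.
  by rewrite rmorphM !rmorphM /= !numqE; ring.
Qed.

HB.instance Definition _ p :=
  GRing.isSubringClosed.Build rat (pint p) (pint_subring_closed p).

Section Reduction.
Variables (p : nat) (pP : prime p).

Lemma Fp_intr_eq0 (z : int) : ((z%:~R : 'F_p) == 0) = (p %| z)%Z.
Proof. by rewrite (dvdz_pcharf (pchar_Fp pP)). Qed.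

Lemma red_ratE (q : rat) (n d : int) : (d%:~R : 'F_p) != 0 ->
  q * d%:~R = n%:~R -> red_rat p q = n%:~R / d%:~R.
Proof.
move=> d_neq0 qd; have E : numq q * d = n * denq q.
  by apply: (@intr_inj rat); rewrite !rmorphM /= numqE -qd; ring.
have den_neq0 : (denq q)%:~R != 0 :> 'F_p.
  apply: contraNneq d_neq0 => /eqP; rewrite Fp_intr_eq0 => pD.
  by rewrite Fp_intr_eq0 (dvdz_trans pD) ?(dvdz_denq qd).
by rewrite /red_rat; apply/eqP; rewrite eqr_div // -!intrM E.
Qed.

Lemma red_rat0 : red_rat p 0 = 0.
Proof. by rewrite /red_rat mul0r. Qed.

Lemma red_rat1 : red_rat p 1 = 1.
Proof. by rewrite (@red_ratE _ 1 1) ?divr1 ?mulr1 // oner_neq0. Qed.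

Lemma red_rat_den_neq0 x : x \in pint p -> (denq x)%:~R != 0 :> 'F_p.
Proof. by rewrite unfold_in /= Fp_intr_eq0 dvdzE -prime_coprime // coprime_sym. Qed.

Lemma red_rat_neq0 q : nonzero_mod p q -> red_rat p q != 0.
Proof.
case/andP; rewrite pintP // => /red_rat_den_neq0 qP nq.
by rewrite /red_rat mulf_neq0 ?invr_eq0 // Fp_intr_eq0.
Qed.

Lemma red_ratB x y : x \in pint p -> y \in pint p ->
  red_rat p (x - y) = red_rat p x - red_rat p y.
Proof.
move=> /red_rat_den_neq0 xP /red_rat_den_neq0 yP.
rewrite (@red_ratE _ (numq x * denq y - numq y * denq x) (denq x * denq y)).
- by rewrite /red_rat !intrM intrB !intrM; field; apply/andP.
- by rewrite intrM mulf_neq0.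
- by rewrite !rmorphB !rmorphM /= !numqE; ring.
Qed.

Lemma red_ratM x y : x \in pint p -> y \in pint p ->
  red_rat p (x * y) = red_rat p x * red_rat p y.
Proof.
move=> /red_rat_den_neq0 xP /red_rat_den_neq0 yP.
rewrite (@red_ratE _ (numq x * numq y) (denq x * denq y)).
- by rewrite /red_rat !intrM; field; apply/andP.
- by rewrite intrM mulf_neq0.
- by rewrite !rmorphM /= !numqE; ring.
Qed.

Lemma red_ratX x n : x \in pint p -> red_rat p (x ^+ n) = red_rat p x ^+ n.
Proof.
move=> xP; elim: n => [|n IHn]; first by rewrite !expr0 red_rat1.
by rewrite !exprS red_ratM ?rpredX // IHn.
Qed.

Lemma not_pintP x : x \notin pint p -> (p %| denq x)%Z /\ coprime `|numq x| p.
Proof.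
rewrite unfold_in /= coprime_sym prime_coprime // negbK => pD.
by split=> //; apply: coprime_dvdr pD (coprime_num_den x).
Qed.

Lemma numq_invq x : x != 0 -> x^-1 * (numq x)%:~R = (denq x)%:~R.
Proof. by move=> x_neq0; rewrite numqE mulrA mulVf // mul1r. Qed.

Lemma pintV x : x \notin pint p -> x^-1 \in pint p.
Proof.
move=> xNP; have [_ nP] := not_pintP xNP.
have x_neq0 : x != 0 by apply: contraNneq xNP => ->; rewrite rpred0.
exact: pint_frac nP (numq_invq x_neq0).
Qed.

Lemma red_ratV x : x \notin pint p -> red_rat p x^-1 = 0.
Proof.
move=> xNP; have [pD nP] := not_pintP xNP.
have x_neq0 : x != 0 by apply: contraNneq xNP => ->; rewrite rpred0.
have den0 : (denq x)%:~R = 0 :> 'F_p by apply/eqP; rewrite Fp_intr_eq0.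
rewrite (red_ratE _ (numq_invq x_neq0)) ?den0 ?mul0r //.
by rewrite Fp_intr_eq0 dvdzE -prime_coprime // coprime_sym.
Qed.

End Reduction.

Record zloc (p : nat) := ZLoc { zloc_val : rat; zloc_valP : zloc_val \in pint p }.
HB.instance Definition _ p := [isSub for @zloc_val p].
HB.instance Definition _ p := [Choice of zloc p by <:].
HB.instance Definition _ p := [SubChoice_isSubComNzRing of zloc p by <:].

Definition red_zloc p (pP : prime p) (x : zloc p) : 'F_p := red_rat p (val x).

Section ReductionMorphism.
Variables (p : nat) (pP : prime p).

Lemma red_zloc_zmod : zmod_morphism (red_zloc pP).
Proof. by move=> x y; rewrite /red_zloc rmorphB red_ratB // zloc_valP. Qed.

Lemma red_zloc_monoid : monoid_morphism (red_zloc pP).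
Proof.
split=> [|x y]; rewrite /red_zloc ?rmorph1 ?red_rat1 //.
by rewrite rmorphM red_ratM // zloc_valP.
Qed.

HB.instance Definition _ :=
  GRing.isZmodMorphism.Build (zloc p) 'F_p (red_zloc pP) red_zloc_zmod.
HB.instance Definition _ :=
  GRing.isMonoidMorphism.Build (zloc p) 'F_p (red_zloc pP) red_zloc_monoid.

Lemma polyOver_zloc (P : {poly rat}) : P \is a polyOver (pint p) ->
  exists P' : {poly zloc p}, P = map_poly val P'.
Proof.
move=> /polyOverP PP; exists (map_poly (insubd (0 : zloc p)) P).
apply/polyP => k; rewrite coef_map coef_map_id0 /= ?insubdK ?PP //.
by apply: val_inj; rewrite /= insubdK ?rpred0.
Qed.

Lemma red_comp_poly (P Q : {poly rat}) :
  P \is a polyOver (pint p) -> Q \is a polyOver (pint p) ->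
  map_poly (red_rat p) (P \Po Q) =
  map_poly (red_rat p) P \Po map_poly (red_rat p) Q.
Proof.
move=> /polyOver_zloc [P' ->] /polyOver_zloc [Q' ->].
have redE (R : {poly zloc p}) :
    map_poly (red_rat p) (map_poly val R) = map_poly (red_zloc pP) R.
  by rewrite -map_poly_comp_id0 ?red_rat0.
by rewrite -map_comp_poly !redE map_comp_poly.
Qed.

Lemma red_XaddC a : a \in pint p ->
  map_poly (red_rat p) ('X + a%:P) = 'X + (red_rat p a)%:P.
Proof.
move=> aP; apply/polyP => k; rewrite coef_map_id0 ?red_rat0 // !coefD !coefX !coefC.
by case: k => [|[|k]]; rewrite /= ?add0r ?addr0 ?red_rat1 ?red_rat0.
Qed.

End ReductionMorphism.

(** * Reduction modulo x^p - x *)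

Definition red_exp (p j : nat) : nat := if j == 0%N then 0%N else (j.-1 %% p.-1).+1.

Lemma red_exp_eq0 p j : (red_exp p j == 0%N) = (j == 0%N).
Proof. by case: j. Qed.

Lemma red_exp_lt p j : (1 < p)%N -> (red_exp p j < p)%N.
Proof.
move=> p_gt1; rewrite /red_exp; case: eqP => _; first lia.
by have := @ltn_pmod j.-1 p.-1; lia.
Qed.

Lemma red_exp_mod p j : (0 < j)%N -> (red_exp p j = j %[mod p.-1])%N.
Proof.
move=> j_gt0; rewrite /red_exp; have -> : (j == 0%N) = false by lia.
by rewrite -addn1 modnDml addn1 prednK.
Qed.

Lemma red_exp_gt p j B : (0 < j)%N ->
  (forall i, (1 <= i <= B)%N -> j != i %[mod p.-1])%N -> (B < red_exp p j)%N.
Proof.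
move=> j_gt0 jB; have r_gt0 : (0 < red_exp p j)%N by rewrite lt0n red_exp_eq0 -lt0n.
by have := jB (red_exp p j); rewrite red_exp_mod // eqxx; lia.
Qed.

Lemma eq_red_exp_mod p i j : (0 < i)%N -> (0 < j)%N ->
  red_exp p i = red_exp p j -> (i = j %[mod p.-1])%N.
Proof. by move=> i_gt0 j_gt0 eq_ij; rewrite -(red_exp_mod p i_gt0) eq_ij red_exp_mod. Qed.

Section ModXpX.
Variables (p : nat) (pP : prime p).
Local Notation m := ('X^p - 'X : {poly 'F_p}).

Lemma size_XpX : size m = p.+1.
Proof.
have p_gt1 := prime_gt1 pP.
rewrite size_polyDl; rewrite ?size_polyN ?size_polyX ?size_polyXn //; lia.
Qed.

Lemma Xn_modXpX j : 'X^j %% m = 'X^(red_exp p j).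
Proof.
have p_gt1 := prime_gt1 pP.
have [n] := ubnP j; elim: n j => // n IHn j j_lt.
have [j_lt_p | p_le_j] := ltnP j p.
  have -> : red_exp p j = j.
    by rewrite /red_exp; case: eqP => // /eqP j0; rewrite modn_small; lia.
  by rewrite modp_small // size_polyXn size_XpX.
have Xj : 'X^j = 'X^(j - p.-1) + 'X^(j - p) * m :> {poly 'F_p}.
  rewrite mulrBr -exprD -exprSr.
  have -> : (j - p + p = j)%N by lia.
  have -> : ((j - p).+1 = j - p.-1)%N by lia.
  by rewrite addrC subrK.
rewrite Xj modpD modp_mull addr0 IHn; last by lia.
congr ('X^ _); rewrite /red_exp.
have -> : (j - p.-1 == 0)%N = false by lia.
have -> : (j == 0)%N = false by lia.
have -> : (j.-1 = (j - p.-1).-1 + p.-1)%N by lia.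
by rewrite modnDr.
Qed.

Lemma coef_modXpX (Q : {poly 'F_p}) k :
  (Q %% m)`_k = \sum_(j < size Q | red_exp p j == k) Q`_j.
Proof.
have -> : Q %% m = \sum_(j < size Q) Q`_j *: 'X^(red_exp p j).
  rewrite -{1}[Q]coefK poly_def.
  by elim/big_rec2: _ => [|j A B _ <-]; rewrite ?mod0p // modpD modpZl Xn_modXpX.
rewrite coef_sum [RHS]big_mkcond; apply: eq_bigr => j _.
by rewrite coefZ coefXn eq_sym; case: eqP; rewrite ?mulr1 ?mulr0.
Qed.

Lemma coef_modXpX_eq0 (Q : {poly 'F_p}) k :
  (forall j, red_exp p j = k -> Q`_j = 0) -> (Q %% m)`_k = 0.
Proof. by move=> Q0; rewrite coef_modXpX big1 // => j /eqP /Q0. Qed.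

Lemma coef_modXpX_single (Q : {poly 'F_p}) n :
  (forall j, j != n -> red_exp p j = red_exp p n -> Q`_j = 0) ->
  (Q %% m)`_(red_exp p n) = Q`_n.
Proof.
move=> Q0; rewrite -{1}(subrK (Q`_n *: 'X^n) Q) modpD modpZl Xn_modXpX.
rewrite coefD coefZ coefXn eqxx mulr1 coef_modXpX_eq0 ?add0r // => j jn.
rewrite coefB coefZ coefXn; have [-> | j_neq_n] := eqVneq j n.
  by rewrite mulr1 subrr.
by rewrite mulr0 subr0 Q0.
Qed.

Lemma XpX_comp_XaddC (u : 'F_p) : m \Po ('X + u%:P) = m.
Proof.
have pcharP : p \in [pchar {poly 'F_p}] by rewrite pchar_poly (pchar_Fp pP).
rewrite comp_polyB comp_polyX rmorphXn /= comp_polyX.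
rewrite -(pFrobenius_autE pcharP) pFrobenius_autD_comm; last exact: mulrC.
rewrite !pFrobenius_autE -rmorphXn /=.
have -> : u ^+ p = u by rewrite -[X in u ^+ X](card_Fp pP) expf_card.
by rewrite opprD addrACA subrr addr0.
Qed.

Lemma modXpX_comp_XaddC (A : {poly 'F_p}) (u : 'F_p) :
  (A \Po ('X + u%:P)) %% m = (A %% m) \Po ('X + u%:P).
Proof.
rewrite {1}(divp_eq A m) comp_polyD comp_polyM XpX_comp_XaddC.
rewrite modp_addl_mul_small // size_comp_poly2 ?size_XaddC ?ltn_modp //.
by rewrite -size_poly_eq0 size_XpX.
Qed.

Lemma XaddC_exp_modXpX (u : 'F_p) n :
  ('X + u%:P) ^+ n %% m = ('X + u%:P) ^+ red_exp p n.
Proof.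
have XuE k : ('X + u%:P) ^+ k = 'X^k \Po ('X + u%:P) by rewrite rmorphXn /= comp_polyX.
by rewrite !XuE modXpX_comp_XaddC Xn_modXpX.
Qed.

Lemma size_poly_red_comp_XaddC f a : f \is a polyOver (pint p) -> a \in pint p ->
  size (poly_red p (f \Po ('X + a%:P))) = size (poly_red p f).
Proof.
move=> fP aP; rewrite /poly_red red_comp_poly ?polyOverXaddC // red_XaddC //.
by rewrite modXpX_comp_XaddC // size_comp_poly2 ?size_XaddC.
Qed.

End ModXpX.

(** * Sums of powers *)

Definition pow_sum (R : nzRingType) (c0 : R) (t : nat) (c : nat -> R)
    (e : nat -> nat) (q : {poly R}) : {poly R} :=
  c0%:P + \sum_(1 <= i < t.+1) c i *: q ^+ e i.

Section PowSum.
Variables (R : idomainType) (c0 : R) (t : nat) (c : nat -> R) (e : nat -> nat).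
Local Notation ps := (pow_sum c0 t c e).

Lemma pow_sum_comp (q r : {poly R}) : ps q \Po r = ps (q \Po r).
Proof.
rewrite comp_polyD comp_polyC linear_sum /=; congr (_ + _).
by apply: eq_bigr => i _; rewrite comp_polyZ rmorphXn.
Qed.

Lemma coef_pow_sum_scaleX (a : R) j : (ps (a *: 'X))`_j =
  c0 * (j == 0%N)%:R + \sum_(1 <= i < t.+1 | e i == j) c i * a ^+ j.
Proof.
rewrite coefD coefC coef_sum [in RHS]big_mkcond /=; congr (_ + _).
  by case: eqP; rewrite ?mulr1 ?mulr0.
apply: eq_bigr => i _; rewrite exprZn !coefZ coefXn eq_sym.
by case: eqP => [-> | _]; rewrite ?mulr1 ?mulr0.
Qed.

Lemma coef_pow_sum_eq0 (a : R) j : (0 < j)%N ->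
  (forall i, (1 <= i <= t)%N -> e i != j) -> (ps (a *: 'X))`_j = 0.
Proof.
move=> j_gt0 ej; rewrite coef_pow_sum_scaleX (gtn_eqF j_gt0) mulr0 add0r.
by rewrite big_nat_cond big1 // => i /andP [/ej/negbTE ->].
Qed.

Hypotheses (t_gt0 : (0 < t)%N) (et_gt0 : (0 < e t)%N).
Hypothesis e_lt_top : forall i, (1 <= i < t)%N -> (e i < e t)%N.

Lemma coef_pow_sum_top (a : R) : (ps (a *: 'X))`_(e t) = c t * a ^+ e t.
Proof.
rewrite coef_pow_sum_scaleX (gtn_eqF et_gt0) mulr0 add0r big_mkcond.
rewrite big_nat_recr //= eqxx big_nat big1 ?add0r // => i i_range.
by rewrite ltn_eqF ?e_lt_top.
Qed.

Hypothesis ct_neq0 : c t != 0.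

Lemma size_pow_sum_X : size (ps 'X) = (e t).+1.
Proof.
rewrite -[ 'X]scale1r; apply/eqP; rewrite eqn_leq; apply/andP; split.
  apply/leq_sizeP => j jt; apply: coef_pow_sum_eq0; first lia.
  move=> i i_range; have [-> | i_neq_t] := eqVneq i t; first lia.
  by have := @e_lt_top i; lia.
by apply: gt_size; rewrite coef_pow_sum_top expr1n mulr1.
Qed.

Lemma lead_coef_pow_sum_X : lead_coef (ps 'X) = c t.
Proof.
by rewrite lead_coefE size_pow_sum_X -[ 'X]scale1r coef_pow_sum_top expr1n mulr1.
Qed.

Lemma pow_sum_XsubC (a : R) : ps ('X - a%:P) = ps 'X \Po ('X - a%:P).
Proof. by rewrite pow_sum_comp comp_polyX. Qed.

Lemma size_pow_sum_XsubC (a : R) : size (ps ('X - a%:P)) = (e t).+1.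
Proof. by rewrite pow_sum_XsubC size_comp_poly2 ?size_XsubC ?size_pow_sum_X. Qed.

Lemma coef_pow_sum_XsubC_top (a : R) : (ps ('X - a%:P))`_(e t) = c t.
Proof.
rewrite -[e t]/((e t).+1.-1) -(size_pow_sum_XsubC a) -lead_coefE pow_sum_XsubC.
by rewrite lead_coef_comp ?size_XsubC // lead_coefXsubC expr1n mulr1 lead_coef_pow_sum_X.
Qed.

End PowSum.

Definition rescale (F : fieldType) (N : nat) (b : F) (f : {poly F}) : {poly F} :=
  b ^+ N *: (f \Po (b^-1 *: 'X)).

Lemma coef_rescale (F : fieldType) N (b : F) (f : {poly F}) k : b != 0 ->
  (size f <= N.+1)%N -> (rescale N b f)`_k = b ^+ (N - k) * f`_k.
Proof.
move=> b_neq0 f_size; rewrite coefZ coef_comp_scaleX mulrA exprVn.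
have [k_le_N | N_lt_k] := leqP k N; last first.
  by rewrite nth_default ?mulr0 // (leq_trans f_size N_lt_k).
by rewrite -{1}(subnK k_le_N) exprD mulfK ?expf_neq0.
Qed.

Section Rescale.
Variables (p : nat) (pP : prime p) (N : nat) (b : rat) (f : {poly rat}).
Hypotheses (bP : b \in pint p) (b_neq0 : b != 0) (b_red : red_rat p b = 0).
Hypotheses (fP : f \is a polyOver (pint p)) (f_size : (size f <= N.+1)%N).

Lemma rescale_polyOver : rescale N b f \is a polyOver (pint p).
Proof.
apply/polyOverP => k; rewrite coef_rescale // rpredM ?rpredX //.
exact: (polyOverP fP).
Qed.

Lemma red_rescale : map_poly (red_rat p) (rescale N b f) = red_rat p f`_N *: 'X^N.
Proof.
apply/polyP => k; rewrite coef_map_id0 ?red_rat0 // coef_rescale // coefZ coefXn.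
rewrite red_ratM ?rpredX ?(polyOverP fP) // red_ratX // b_red.
have [k_lt_N | N_lt_k | ->] := ltngtP k N.
- by rewrite expr0n subn_eq0 leqNgt k_lt_N mul0r mulr0.
- by rewrite nth_default ?red_rat0 ?mulr0 // (leq_trans f_size N_lt_k).
- by rewrite subnn expr0 mul1r mulr1.
Qed.

End Rescale.

Section ReducedPowSum.
Variables (p : nat) (pP : prime p).
Variables (c0 : rat) (t : nat) (c : nat -> rat) (e : nat -> nat).
Hypotheses (t_gt0 : (0 < t)%N) (et_gt0 : (0 < e t)%N).
Hypothesis e_lt_top : forall i, (1 <= i < t)%N -> (e i < e t)%N.
Hypothesis ct_red : red_rat p (c t) != 0.
Variable alpha : rat.
Local Notation f := (pow_sum c0 t c e ('X - alpha%:P)).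
Hypothesis fP : f \is a polyOver (pint p).

Lemma ct_neq0 : c t != 0.
Proof. by apply: contraNneq ct_red => ->; rewrite red_rat0. Qed.

Lemma red_exp_top_lt_size : alpha \in pint p ->
  (forall i, (1 <= i < t)%N -> red_exp p (e i) != red_exp p (e t)) ->
  (red_exp p (e t) < size (poly_red p f))%N.
Proof.
move=> alphaP e_res; rewrite -(size_poly_red_comp_XaddC pP fP alphaP).
rewrite pow_sum_comp comp_polyB comp_polyX comp_polyC addrK -[ 'X]scale1r.
apply: gt_size; rewrite coef_modXpX_single // => [|j j_neq jN].
  by rewrite coef_map_id0 ?red_rat0 // coef_pow_sum_top // expr1n mulr1.
rewrite coef_map_id0 ?red_rat0 // coef_pow_sum_eq0 ?red_rat0 //.
  by rewrite lt0n -(red_exp_eq0 p) jN red_exp_eq0 -lt0n.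
move=> i i_range; have [-> | i_neq_t] := eqVneq i t; first by rewrite eq_sym.
have i_lt_t : (1 <= i < t)%N by lia.
by apply: contra_neq (e_res i i_lt_t) => ->.
Qed.

Lemma center_pint : (t < red_exp p (e t))%N -> alpha \in pint p.
Proof.
move=> t_lt_d; apply: contraT => alphaNP.
have alpha_neq0 : alpha != 0 by apply: contraNneq alphaNP => ->; rewrite rpred0.
have betaP : alpha^-1 \in pint p := pintV pP alphaNP.
have beta_neq0 : alpha^-1 != 0 by rewrite invr_eq0.
have beta_red : red_rat p alpha^-1 = 0 := red_ratV pP alphaNP.
have f_size : (size f <= (e t).+1)%N by rewrite size_pow_sum_XsubC // ct_neq0.
have f_top : f`_(e t) = c t by apply: coef_pow_sum_XsubC_top => //; apply: ct_neq0.
pose G := rescale (e t) alpha^-1 f \Po ('X + 1%:P).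
have GE : G = alpha ^- e t *: pow_sum c0 t c e (alpha *: 'X).
  rewrite /G /rescale comp_polyZ -comp_polyA pow_sum_comp exprVn.
  congr (_ *: pow_sum c0 t c e _); rewrite invrK comp_polyZ !comp_polyX.
  by rewrite comp_polyB comp_polyC scalerDr alg_polyC comp_polyX addrK.
have redG : map_poly (red_rat p) G = red_rat p (c t) *: ('X + 1) ^+ e t.
  rewrite (red_comp_poly pP) ?rescale_polyOver ?polyOverXaddC ?rpred1 //.
  rewrite (red_rescale pP) // (red_XaddC pP) ?rpred1 // (red_rat1 pP) f_top.
  by rewrite comp_polyZ rmorphXn /= comp_polyX polyC1.
have [k k_range k_miss] := exists_notin_image (fun i => red_exp p (e i)) t_lt_d.
have : (map_poly (red_rat p) G %% ('X^p - 'X))`_k = 0.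
  apply: coef_modXpX_eq0 => // j jk.
  rewrite coef_map_id0 ?red_rat0 // GE coefZ coef_pow_sum_eq0 ?mulr0 ?red_rat0 //.
    by rewrite lt0n -(red_exp_eq0 p) jk; lia.
  by move=> i i_range; apply: contra_neq (k_miss i i_range) => ->.
rewrite redG modpZl -polyC1 XaddC_exp_modXpX // polyC1 coefZ coef_XaddC1_exp; last lia.
move/eqP; rewrite mulf_eq0 (negbTE ct_red) -(dvdn_pcharf (pchar_Fp pP)) /=.
rewrite (negbTE (prime_ndvd_bin pP _ _)) //; last lia.
exact: red_exp_lt (prime_gt1 pP).
Qed.

End ReducedPowSum.

Unset Implicit Arguments.

Theorem mainTheorem1 (alpha c0 : rat) (t : nat) (c : nat -> rat) (e : nat -> nat)
    (BT p : nat) :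
  (0 < t)%N ->
  (forall i, (1 <= i <= t)%N -> c i != 0) ->
  (0 < e 1)%N ->
  (forall i, (1 <= i < t)%N -> (e i < e i.+1)%N) ->
  (t <= BT)%N ->
  prime p ->
  let f : {poly rat} :=
    c0%:P + \sum_(1 <= i < t.+1) c i *: ('X - alpha%:P) ^+ (e i) in
  (* f^(p) is defined: all coefficients of f are p-integral *)
  (forall k, p_integral p f`_k) ->
  nonzero_mod p (c t) ->
  (forall i, (1 <= i <= t.-1)%N -> e t != e i %[mod p.-1])%N ->
  (forall i, (1 <= i <= 2 * BT)%N -> e t != i %[mod p.-1])%N ->
  (2 * BT < (size (poly_red p f)).-1)%N.
Proof.
move=> t_gt0 _ e1_gt0 e_lt_succ t_le_BT pP f f_int ct_nz et_res et_small.
have e_incr := homo_ltn_range e_lt_succ.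
have e_lt_top i : (1 <= i < t)%N -> (e i < e t)%N.
  by move=> i_range; apply: e_incr; rewrite ?inE; lia.
have e_gt0 i : (1 <= i <= t)%N -> (0 < e i)%N.
  move=> i_range; have [-> // | i_neq1] := eqVneq i 1%N.
  by apply: ltn_trans e1_gt0 (e_incr 1%N i _ _ _); rewrite ?inE; lia.
have et_gt0 := e_gt0 t ltac:(lia).
have d_gt : (2 * BT < red_exp p (e t))%N := red_exp_gt et_gt0 et_small.
have d_res i : (1 <= i < t)%N -> red_exp p (e i) != red_exp p (e t).
  move=> i_range; apply: contra_neq (et_res i ltac:(lia)) => ei_et.
  by rewrite (eq_red_exp_mod (e_gt0 i ltac:(lia)) et_gt0 ei_et).
have fP : f \is a polyOver (pint p) by apply/polyOverP => k; rewrite -pintP.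
have ct_red := red_rat_neq0 pP ct_nz.
have alphaP := center_pint pP t_gt0 et_gt0 e_lt_top ct_red fP ltac:(lia).
have f_size : (red_exp p (e t) < size (poly_red p f))%N :=
  red_exp_top_lt_size pP t_gt0 et_gt0 e_lt_top ct_red fP alphaP d_res.
lia.
Qed.
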